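(* Let $S$ be a solid and let $x,y,z\in S$. If $e(x)(y+z)\ne e(x)y+e(x)z$, then $e(x)y=e(x)z$.
   Context: A solid is a set $S$ with two binary operations $+$ and $\cdot$ (written $xy$) and a binary relation $\le$ satisfying the following axioms (all variables range over $S$). (A1) $+$ is associative and commutative. (A2) For each $x$ there is $e$ with $x+e=x$ such that $e+f=e$ for every $f$ with $x+f=x$; this $e$ is unique and is denoted $e(x)$ (the magnitude of $x$). An element $x$ with $x=e(x)$ is called a magnitude. (A3) For each $x$ there is $s$ with $x+s=e(x)$ and $e(s)=e(x)$; it is unique and denoted $-x$; write $x-y$ for $x+(-y)$. (A4) $e(x+y)=e(x)$ or $e(x+y)=e(y)$. (M1) $\cdot$ is associative and commutative. (M2) For each $x\neq e(x)$ there is $u$ with $xu=x$ such that $uv=u$ for every $v$ with $xv=x$; it is unique and denoted $u(x)$. (M3) For each $x\ne e(x)$ there is $d$ with $xd=u(x)$ and $u(d)=u(x)$; it is unique and denoted $x^{-1}$; write $y/x$ for $yx^{-1}$. (M4) If $x\neq e(x)$ and $y\ne e(y)$ then $u(xy)=u(x)$ or $u(xy)=u(y)$. (O1) $\le$ is a total order (reflexive, antisymmetric, transitive, total); $x<y$ means $x\le y$ and $x\ne y$. (O2) $x\le y\Rightarrow x+z\le y+z$. (O3) $y+e(x)=e(x)\Rightarrow (y\le e(x)$ and $-y\le e(x))$. (O4) $(e(x)<x$ and $y\le z)\Rightarrow xy\le xz$. (O5) $e(y)\le y\le z\Rightarrow e(x)y\le e(x)z$. (AM1) For all $x,y$ there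 is $z$ with $e(x)y=e(z)$. (AM2) $e(xy)=e(x)y+e(y)x$. (AM3) If $x\ne e(x)$ then $e(u(x))=e(x)/x$. (AM4) (distributivity axiom) $xy+xz=x(y+z)+e(x)y+e(x)z$. (AM5) $-(xy)=(-x)y$. (E1) There is $m$ with $m+x=x$ for all $x$; it is unique, called zero and denoted $0$. (E2) There is $u$ with $ux=x$ for all $x$; it is unique, called one and denoted $1$. (E3) There is $M$ with $e(x)+M=M$ for all $x$. (E4) There is $x$ with $e(x)\ne 0$ and $e(x)\ne M$. (E5) For every $x$ there is $a$ with $x=a+e(x)$ and $e(a)=0$. (E6) If $x,y$ are magnitudes with $x<y$, there is $z$ with $z\ne e(z)$ and $x<z<y$. Further notation: $S^*=\{x\in S: x\ne e(x)\}$ (zeroless elements). $x$ is positive if $e(x)\le x$ and negative if $x<e(x)$; $|x|=x$ if $x$ is positive and $|x|=-x$ if $x$ is negative. $x$ is precise if $e(x)=0$. The relative uncertainty $R(x)$ is $e(u(x))$ if $x\ne e(x)$, and $M$ (from (E3)) if $x=e(x)$. *)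

(* Axiomatic definition of a "solid" (Dinis--van den Berg). *)
From Stdlib Require Import Classical.

(* The operations e(.), -(.), u(.), (.)^{-1} whose existence and uniqueness
   are asserted by axioms (A2),(A3),(M2),(M3) are carried as functions
   together with their characterizing properties and uniqueness.
   u and inv are total functions, but only specified on zeroless elements
   x <> e x.  zero (E1), one (E2) and M (E3) are carried as elements. *)
Record Solid : Type := {
  carrier :> Type;
  add : carrier -> carrier -> carrier;
  mul : carrier -> carrier -> carrier;
  le  : carrier -> carrier -> Prop;
  e   : carrier -> carrier;
  opp : carrier -> carrier;
  u   : carrier -> carrier;
  inv : carrier -> carrier;
  zero : carrier;
  one  : carrier;
  bigM : carrier;
  add_assoc : forall x y z, add x (add y z) = add (add x y) z;
  add_comm : forall x y, add x y = add y x;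
  A2_spec : forall x, add x (e x) = x /\ (forall f, add x f = x -> add (e x) f = e x);
  A2_uniq : forall x m, add x m = x -> (forall f, add x f = x -> add m f = m) -> m = e x;
  A3_spec : forall x, add x (opp x) = e x /\ e (opp x) = e x;
  A3_uniq : forall x s, add x s = e x -> e s = e x -> s = opp x;
  A4 : forall x y, e (add x y) = e x \/ e (add x y) = e y;
  mul_assoc : forall x y z, mul x (mul y z) = mul (mul x y) z;
  mul_comm : forall x y, mul x y = mul y x;
  M2_spec : forall x, x <> e x ->
     mul x (u x) = x /\ (forall v, mul x v = x -> mul (u x) v = u x);
  M2_uniq : forall x w, x <> e x -> mul x w = x ->
     (forall v, mul x v = x -> mul w v = w) -> w = u x;
  M3_spec : forall x, x <> e x -> mul x (inv x) = u x /\ u (inv x) = u x;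
  M3_uniq : forall x d, x <> e x -> mul x d = u x -> u d = u x -> d = inv x;
  M4 : forall x y, x <> e x -> y <> e y ->
     u (mul x y) = u x \/ u (mul x y) = u y;
  le_refl : forall x, le x x;
  le_antisym : forall x y, le x y -> le y x -> x = y;
  le_trans : forall x y z, le x y -> le y z -> le x z;
  le_total : forall x y, le x y \/ le y x;
  O2 : forall x y z, le x y -> le (add x z) (add y z);
  O3 : forall x y, add y (e x) = e x -> le y (e x) /\ le (opp y) (e x);
  O4 : forall x y z, (le (e x) x /\ e x <> x) -> le y z -> le (mul x y) (mul x z);
  O5 : forall x y z, le (e y) y -> le y z -> le (mul (e x) y) (mul (e x) z);
  AM1 : forall x y, exists z, mul (e x) y = e z;
  AM2 : forall x y, e (mul x y) = add (mul (e x) y) (mul (e y) x);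
  AM3 : forall x, x <> e x -> e (u x) = mul (e x) (inv x);
  AM4 : forall x y z, add (mul x y) (mul x z)
          = add (add (mul x (add y z)) (mul (e x) y)) (mul (e x) z);
  AM5 : forall x y, opp (mul x y) = mul (opp x) y;
  E1 : forall x, add zero x = x;
  E2 : forall x, mul one x = x;
  E3 : forall x, add (e x) bigM = bigM;
  E4 : exists x, e x <> zero /\ e x <> bigM;
  E5 : forall x, exists a, x = add a (e x) /\ e a = zero;
  E6 : forall x y, x = e x -> y = e y -> (le x y /\ x <> y) ->
         exists z, z <> e z /\ (le x z /\ x <> z) /\ (le z y /\ z <> y)
}.

Arguments add {s0}. Arguments mul {s0}. Arguments le {s0}. Arguments e {s0}.
Arguments opp {s0}. Arguments u {s0}. Arguments inv {s0}.

From Stdlib Require Import Classical.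

(* Put a := e(x); then p := a y, q := a z and w := a(y+z) are magnitudes, and
   magnitudes are totally ordered by absorption: m + n is the larger of m, n.
   Distributivity (AM4) for the magnitude a reads  p + q = w + (p + q),  so
   w <= max(p, q).  Applying it to y + z and -y, and using  a(-y) = a y  and the
   monotonicity  a z <= a(z + e(y)),  gives  q <= w  or  q <= p.  So if p < q
   then w = q = p + q; by symmetry, w = p + q whenever p <> q. *)

Section Magnitudes.
Variable S : Solid.
Implicit Types x y z a m n : S.

Definition magnitude m : Prop := e m = m.

Lemma magnitude_e x : magnitude (e x).
Proof.
  symmetry. apply A2_uniq.
  - destruct (A2_spec S x) as [Hx He]. exact (He _ Hx).
  - intros f Hf. exact Hf.
Qed.

Lemma magnitude_mul a y : magnitude a -> magnitude (mul a y).
Proof.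
  intros Ha. rewrite <- Ha. destruct (AM1 S a y) as [t ->]. apply magnitude_e.
Qed.

Lemma add_mag_idem m : magnitude m -> add m m = m.
Proof. intros Hm. destruct (A2_spec S m) as [H _]. rewrite Hm in H. exact H. Qed.

Lemma add_mag_cases m n :
  magnitude m -> magnitude n -> add m n = m \/ add m n = n.
Proof.
  intros Hm Hn. destruct (A2_spec S (add m n)) as [_ Habs].
  destruct (A4 S m n) as [E|E]; rewrite E in Habs.
  - left. rewrite Hm in Habs. apply Habs.
    rewrite <- add_assoc, (add_mag_idem n Hn). reflexivity.
  - right. rewrite Hn in Habs. rewrite add_comm. apply Habs.
    rewrite (add_comm S m n), <- add_assoc, (add_mag_idem m Hm). reflexivity.
Qed.

Lemma le_of_add_mag m n : magnitude n -> add m n = n -> le m n.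
Proof.
  intros Hn H. destruct (O3 S n m) as [Hle _].
  - rewrite Hn. exact H.
  - rewrite Hn in Hle. exact Hle.
Qed.

Lemma zero_le_mag m : magnitude m -> le (zero S) m.
Proof. intros Hm. apply le_of_add_mag; [exact Hm | apply E1]. Qed.

Lemma le_add_mag_r z m : magnitude m -> le z (add z m).
Proof.
  intros Hm. pose proof (O2 S _ _ z (zero_le_mag m Hm)) as H.
  rewrite E1, add_comm in H. exact H.
Qed.

Lemma opp_mag m : magnitude m -> opp m = m.
Proof.
  intros Hm. symmetry. apply A3_uniq; [| reflexivity].
  rewrite Hm. apply add_mag_idem, Hm.
Qed.

Lemma mul_mag_opp a z : magnitude a -> mul a (opp z) = mul a z.
Proof.
  intros Ha. rewrite mul_comm, <- AM5, mul_comm, AM5, (opp_mag a Ha).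
  reflexivity.
Qed.

Lemma add_add_swap y z y' z' :
  add (add y z) (add y' z') = add (add y y') (add z z').
Proof.
  rewrite <- !add_assoc. f_equal. rewrite !add_assoc. f_equal.
  apply add_comm.
Qed.

Lemma e_add y z : e (add y z) = add (e y) (e z).
Proof.
  assert (Habs : add (add y z) (add (e y) (e z)) = add y z).
  { rewrite add_add_swap. destruct (A2_spec S y) as [-> _].
    destruct (A2_spec S z) as [-> _]. reflexivity. }
  destruct (A2_spec S (add y z)) as [_ Hmin]. specialize (Hmin _ Habs).
  destruct (A4 S y z) as [E|E]; rewrite E in Hmin |- *.
  - rewrite add_assoc, (add_mag_idem _ (magnitude_e y)) in Hmin.
    symmetry. exact Hmin.
  - rewrite (add_comm S (e y)), add_assoc,
      (add_mag_idem _ (magnitude_e z)), add_comm in Hmin.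
    symmetry. exact Hmin.
Qed.

Lemma opp_add y z : opp (add y z) = add (opp y) (opp z).
Proof.
  symmetry. apply A3_uniq.
  - rewrite add_add_swap, e_add.
    destruct (A3_spec S y) as [-> _]. destruct (A3_spec S z) as [-> _].
    reflexivity.
  - rewrite !e_add. destruct (A3_spec S y) as [_ ->].
    destruct (A3_spec S z) as [_ ->]. reflexivity.
Qed.

Lemma le_e_opp_of_neg z : le z (e z) -> le (e (opp z)) (opp z).
Proof.
  intros Hneg. pose proof (O2 S _ _ (opp z) Hneg) as H.
  destruct (A3_spec S z) as [Hz He]. rewrite Hz, add_comm in H.
  rewrite He. rewrite <- He in H at 2.
  destruct (A2_spec S (opp z)) as [Hid _]. rewrite Hid in H. exact H.
Qed.

(* O5 only covers positive arguments; a negative z is handled through -z,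
   on which multiplication by the magnitude a acts trivially. *)
Lemma mul_mag_le_add_mag a z m :
  magnitude a -> magnitude m -> le (mul a z) (mul a (add z m)).
Proof.
  intros Ha Hm. destruct (le_total S (e z) z) as [Hpos|Hneg].
  - pose proof (O5 S a z _ Hpos (le_add_mag_r z m Hm)) as H.
    rewrite Ha in H. exact H.
  - pose proof (O5 S a _ _ (le_e_opp_of_neg z Hneg)
                  (le_add_mag_r (opp z) m Hm)) as H.
    rewrite Ha, (mul_mag_opp a z Ha), <- (opp_mag m Hm), <- opp_add,
      (mul_mag_opp a _ Ha) in H.
    exact H.
Qed.

Lemma mul_mag_distr a y z : magnitude a ->
  add (mul a y) (mul a z) = add (mul a (add y z)) (add (mul a y) (mul a z)).
Proof. intros Ha. rewrite AM4 at 1. rewrite Ha, <- !add_assoc. reflexivity. Qed.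

Lemma mul_mag_le_add_or_le a y z : magnitude a ->
  le (mul a z) (mul a (add y z)) \/ le (mul a z) (mul a y).
Proof.
  intros Ha.
  pose proof (mul_mag_distr a (add y z) (opp y) Ha) as H.
  rewrite (mul_mag_opp a y Ha) in H.
  replace (add (add y z) (opp y)) with (add z (e y)) in H
    by (rewrite (add_comm S y z), <- add_assoc;
        destruct (A3_spec S y) as [-> _]; reflexivity).
  pose proof (mul_mag_le_add_mag a z (e y) Ha (magnitude_e y)) as Hqr.
  destruct (add_mag_cases _ _ (magnitude_mul a (add y z) Ha)
              (magnitude_mul a y Ha)) as [F|F];
    rewrite F in H; [left | right];
    apply (le_trans S _ _ _ Hqr), le_of_add_mag;
    solve [apply magnitude_mul, Ha | symmetry; exact H].
Qed.

Lemma mul_mag_add_eq_of_absorbs a y z : magnitude a ->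
  add (mul a y) (mul a z) = mul a z -> mul a y <> mul a z ->
  mul a (add y z) = mul a z.
Proof.
  intros Ha Hpq Hne.
  assert (Hwq : le (mul a (add y z)) (mul a z)).
  { apply le_of_add_mag; [apply magnitude_mul, Ha |].
    pose proof (mul_mag_distr a y z Ha) as H. rewrite Hpq in H.
    symmetry. exact H. }
  destruct (mul_mag_le_add_or_le a y z Ha) as [Hqw|Hqp].
  - apply (le_antisym S); assumption.
  - exfalso. apply Hne, (le_antisym S); [| exact Hqp].
    apply le_of_add_mag; [apply magnitude_mul, Ha | exact Hpq].
Qed.

Lemma mul_mag_add_eq_sum a y z : magnitude a -> mul a y <> mul a z ->
  mul a (add y z) = add (mul a y) (mul a z).
Proof.
  intros Ha Hne.
  destruct (add_mag_cases _ _ (magnitude_mul a y Ha) (magnitude_mul a z Ha))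
    as [F|F]; rewrite F.
  - rewrite add_comm in F. rewrite add_comm.
    apply mul_mag_add_eq_of_absorbs; [exact Ha | exact F | congruence].
  - apply mul_mag_add_eq_of_absorbs; assumption.
Qed.

End Magnitudes.

Theorem mainTheorem5 (S : Solid) (x y z : S) :
  mul (e x) (add y z) <> add (mul (e x) y) (mul (e x) z) ->
  mul (e x) y = mul (e x) z.
Proof.
  intros Hnot_distr. apply NNPP. intros Hne.
  apply Hnot_distr, mul_mag_add_eq_sum; [apply magnitude_e | exact Hne].
Qed.
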